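(* Consider the FlexPD-C iterates described in the context with $\beta>0$, integer $T\ge1$ and $0<\alpha<1/\rho(B)$, and let $C=\sum_{t=0}^{T-1}(I-\alpha B)^t$, $M=C^{-1}(I-\alpha B)^T$, $N=\frac{1}{\alpha}(C^{-1}-M)$. Then for any $\tilde d,\tilde g,\tilde e>1$ and every $k\ge0$, \[\|\lambda^{k+1}-\lambda^*\|^2\le\frac{\tilde d}{\alpha^2 s(AA')}\Big(\frac{\tilde e}{\tilde e-1}\rho(M)^2+\tilde e\alpha^2L^2\Big)\|x^k-x^{k+1}\|^2+\frac{\tilde d}{(\tilde d-1)\alpha^2 s(AA')}\Big(\frac{\tilde g}{\tilde g-1}\alpha^2\rho\big((\beta A'A-N)^2\big)+\tilde g\alpha^2L^2\Big)\|x^{k+1}-x^*\|^2,\] where $s(AA')$ is the smallest nonzero eigenvalue of $AA'$.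
   Context: Setting: $n$ agents are connected by a connected undirected graph with edge set $\mathcal E$, $\epsilon=|\mathcal E|$. For $x\in\mathbb R^n$ let $f(x)=\sum_{i=1}^n f_i(x_i)$, where each $f_i:\mathbb R\to\mathbb R$ is twice differentiable with $m\le f_i''\le L$ for constants $0<m\le L$; $\nabla f(x)=(f_1'(x_1),\dots,f_n'(x_n))'$. $A\in\mathbb R^{\epsilon\times n}$ is the edge–node incidence matrix (null space spanned by the all-ones vector). $B\in\mathbb R^{n\times n}$ is symmetric positive semidefinite with the same null space as $A$, off-diagonal entries nonzero only on edges. $x^*$ is the unique minimizer of $f$ subject to $Ax=0$ and $\lambda^*$ a Lagrange multiplier with $\nabla f(x^* )+A'\lambda^*=0$, $Ax^*=0$, $Bx^*=0$, chosen in the column space of $A$ (orthogonal to the null space of $A'$). FlexPD-C: given $\alpha,\beta>0$, $T\ge1$, $x^0$ arbitrary, $\lambda^0=0$; for $k\ge0$: $x^{k+1,0}=x^k$; for $t=1,\dots,T$, $x^{k+1,t}=x^{k+1,t-1}-\alpha\nabla f(x^k)-\alpha A'\lambda^k-\alpha Bx^{k+1,t-1}$; then $x^{k+1}=x^{k+1,T}$, $\lambda^{k+1}=\lambda^k+\beta Ax^{k+1}$. Notation: $\rho(S)$ largest eigenvalue of a symmetric matrix $S$; $\|\cdot\|$ Euclidean norm. *)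

From HB Require Import structures.
From mathcomp Require Import all_boot all_order all_algebra.
From mathcomp Require Import all_classical all_reals all_analysis.
Set Implicit Arguments. Unset Strict Implicit. Unset Printing Implicit Defensive.
Import Order.TTheory GRing.Theory Num.Theory.
Local Open Scope ring_scope.

Section Defs.
Variable R : realType.

Definition sqnorm (k : nat) (v : 'cV[R]_k) : R := \sum_i (v i 0) ^+ 2.

Definition is_max_eig (k : nat) (S : 'M[R]_k) (r : R) : Prop :=
  eigenvalue S r /\ forall a, eigenvalue S a -> a <= r.

Definition is_min_nonzero_eig (k : nat) (S : 'M[R]_k) (r : R) : Prop :=
  [/\ eigenvalue S r, r != 0 & forall a, eigenvalue S a -> a != 0 -> r <= a].

(* Graph given by its edges e : 'I_eps with endpoints ends e (an orientation). *)
Definition graph_adj (n eps : nat) (ends : 'I_eps -> 'I_n * 'I_n) : rel 'I_n :=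
  fun i j => [exists e, (ends e == (i, j)) || (ends e == (j, i))].

Definition simple_connected_graph (n eps : nat) (ends : 'I_eps -> 'I_n * 'I_n) : Prop :=
  [/\ forall e, (ends e).1 != (ends e).2,
      forall e e', (ends e == ends e') || (ends e == ((ends e').2, (ends e').1)) -> e = e'
    & forall i j, connect (graph_adj ends) i j].

Definition incidence (n eps : nat) (ends : 'I_eps -> 'I_n * 'I_n) : 'M[R]_(eps, n) :=
  \matrix_(e, i) (if i == (ends e).1 then 1 else if i == (ends e).2 then -1 else 0).

(* gradient of f(x) = sum_i f_i(x_i) *)
Definition grad (n : nat) (f : 'I_n -> R -> R) (x : 'cV[R]_n) : 'cV[R]_n :=
  \col_i derive1 (f i) (x i 0).

Definition fsum (n : nat) (f : 'I_n -> R -> R) (x : 'cV[R]_n) : R :=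
  \sum_i f i (x i 0).

Definition flexpd_inner (n eps : nat) (f : 'I_n -> R -> R) (A : 'M[R]_(eps, n))
  (B : 'M[R]_n) (alpha : R) (T : nat) (xk : 'cV[R]_n) (lk : 'cV[R]_eps) : 'cV[R]_n :=
  iter T (fun z => z - alpha *: grad f xk - alpha *: (A^T *m lk) - alpha *: (B *m z)) xk.

Definition Cmat (n : nat) (B : 'M[R]_n) (alpha : R) (T : nat) : 'M[R]_n :=
  \sum_(t < T) (1%:M - alpha *: B) ^+ t.
Definition Mmat (n : nat) (B : 'M[R]_n) (alpha : R) (T : nat) : 'M[R]_n :=
  invmx (Cmat B alpha T) *m (1%:M - alpha *: B) ^+ T.
Definition Nmat (n : nat) (B : 'M[R]_n) (alpha : R) (T : nat) : 'M[R]_n :=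
  alpha^-1 *: (invmx (Cmat B alpha T) - Mmat B alpha T).

End Defs.

From HB Require Import structures.
From mathcomp Require Import all_boot all_order all_algebra.
From mathcomp Require Import all_classical all_reals all_analysis.
From mathcomp Require Import complex ring lra.
Import Order.TTheory GRing.Theory Num.Theory Num.Def.
Set Implicit Arguments. Unset Strict Implicit. Unset Printing Implicit Defensive.
Local Open Scope ring_scope.
Local Open Scope sesquilinear_scope.

(* Unrolling the T inner steps gives C^-1 x^{k+1} = M x^k - alpha (grad f(x^k) + A' lam^k)
   with C^-1 = M + alpha N.  Together with the dual update and the optimality conditions
   A xs = 0, N xs = 0, grad f(xs) + A' lams = 0, this writes alpha A' (lam^{k+1} - lams) as
     [M (x^k - x^{k+1}) - alpha (grad f(x^k) - grad f(x^{k+1}))]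
   + [alpha (beta A'A - N) (x^{k+1} - xs) - alpha (grad f(x^{k+1}) - grad f(xs))].
   As lam^{k+1} - lams lies in the range of A, the left-hand side has squared norm at least
   alpha^2 s(AA') |lam^{k+1} - lams|^2.  The right-hand side is bounded with
   |p + q|^2 <= c/(c-1) |p|^2 + c |q|^2 (for c = d, g, e), the L-Lipschitz gradient and
   the spectral bounds |(beta A'A - N) v|^2 <= rho((beta A'A - N)^2) |v|^2 and
   |M v| <= rho(M) |v|.  The latter holds because I - alpha B, C, M and N are all
   diagonal in a unitary eigenbasis of B (over R[i]), M having the nonnegative
   eigenvalues (1 - alpha d)^T / sum_(t < T) (1 - alpha d)^t, d in the spectrum of B. *)

Section SquaredNorm.
Variable R : realType.
Implicit Types (c : R) (n : nat).

Lemma sqnorm_ge0 n (v : 'cV[R]_n) : 0 <= sqnorm v.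
Proof. by apply: sumr_ge0 => i _; exact: sqr_ge0. Qed.

Lemma sqnorm_gt0 n (v : 'cV[R]_n) : v != 0 -> 0 < sqnorm v.
Proof.
move=> v0; rewrite lt_def sqnorm_ge0 andbT; apply: contra v0 => /eqP v2_0.
apply/eqP/matrixP => i j; rewrite (ord1 j) mxE.
have /eqP := psumr_eq0P (fun l _ => sqr_ge0 (v l 0)) v2_0 (i := i) isT.
by rewrite sqrf_eq0 => /eqP.
Qed.

Lemma sqnormE n (v : 'cV[R]_n) : sqnorm v = (v^T *m v) 0 0.
Proof. by rewrite mxE; apply: eq_bigr => i _; rewrite !mxE expr2. Qed.

Lemma sqnormZ n c (v : 'cV[R]_n) : sqnorm (c *: v) = c ^+ 2 * sqnorm v.
Proof. by rewrite /sqnorm mulr_sumr; apply: eq_bigr => i _; rewrite !mxE exprMn. Qed.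

Lemma sqnormN n (v : 'cV[R]_n) : sqnorm (- v) = sqnorm v.
Proof. by apply: eq_bigr => i _; rewrite !mxE sqrrN. Qed.

Lemma sqnorm_mulmx p n (S : 'M[R]_(p, n)) (v : 'cV[R]_n) :
  sqnorm (S *m v) = (v^T *m (S^T *m S) *m v) 0 0.
Proof. by rewrite sqnormE trmx_mul !mulmxA. Qed.

(* The slack is [(a - (c - 1) b)^2 / (c - 1)]. *)
Lemma sqrD_le c (a b : R) : 1 < c -> (a + b) ^+ 2 <= c / (c - 1) * a ^+ 2 + c * b ^+ 2.
Proof.
move=> c1; have c1_neq0 : c - 1 != 0 by rewrite subr_eq0 gt_eqF.
have -> : c / (c - 1) * a ^+ 2 + c * b ^+ 2 =
          (a + b) ^+ 2 + (a - (c - 1) * b) ^+ 2 / (c - 1) by field.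
by rewrite lerDl divr_ge0 ?sqr_ge0 // subr_ge0 ltW.
Qed.

Lemma sqnormD_le n c a b (p q : 'cV[R]_n) : 1 < c ->
  sqnorm p <= a -> sqnorm q <= b -> sqnorm (p + q) <= c / (c - 1) * a + c * b.
Proof.
move=> c1 pa qb; apply: (@le_trans _ _ (c / (c - 1) * sqnorm p + c * sqnorm q)).
  rewrite /sqnorm !mulr_sumr -big_split /=.
  by apply: ler_sum => i _; rewrite !mxE sqrD_le.
have c_ge0 : 0 <= c by rewrite (le_trans ler01) ?ltW.
have cc_ge0 : 0 <= c / (c - 1) by rewrite divr_ge0 // subr_ge0 ltW.
by rewrite lerD // ler_wpM2l.
Qed.

Lemma sqnormB_le n c a b (p q : 'cV[R]_n) : 1 < c ->
  sqnorm p <= a -> sqnorm q <= b -> sqnorm (p - q) <= c / (c - 1) * a + c * b.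
Proof. by move=> c1 pa qb; rewrite sqnormD_le // sqnormN. Qed.

End SquaredNorm.

Lemma derive1_lipschitz (R : realType) (g : R -> R) (L : R) :
  (forall t, derivable g t 1) -> (forall t, `|derive1 g t| <= L) ->
  forall a b, `|g a - g b| <= L * `|a - b|.
Proof.
move=> dg g'L; suff le_ab a b : a <= b -> `|g a - g b| <= L * `|a - b|.
  move=> a b; have [/le_ab // | /ltW/le_ab] := leP a b.
  by rewrite distrC [`|a - b|]distrC.
move=> ab; have g'E t : t \in `]a, b[ -> is_derive t 1 g (derive1 g t).
  by move=> _; rewrite derive1E; exact/derivableP.
rewrite distrC [`|a - b|]distrC; have [|c _ ->] := MVT_segment ab g'E.
  by apply: (@derivable_within_continuous R R g `[a, b]) => t _; exact: dg.
by rewrite normrM ler_wpM2r.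
Qed.

Lemma grad_lipschitz (R : realType) n (f : 'I_n -> R -> R) (L : R) (x y : 'cV[R]_n) :
  (forall i t, derivable (derive1 (f i)) t 1) ->
  (forall i t, `|derive1 (derive1 (f i)) t| <= L) ->
  sqnorm (grad f x - grad f y) <= L ^+ 2 * sqnorm (x - y).
Proof.
move=> df' f''L; rewrite /sqnorm mulr_sumr; apply: ler_sum => i _; rewrite !mxE.
have L_ge0 : 0 <= L by rewrite (le_trans _ (f''L i 0)).
rewrite -[X in X <= _]real_normK ?num_real // -(real_normK (num_real (x i 0 - y i 0))).
by rewrite -exprMn lerXn2r ?nnegrE ?mulr_ge0 // derive1_lipschitz.
Qed.

Lemma sqnorm_sub_grad_le (R : realType) n (f : 'I_n -> R -> R) (S : 'M[R]_n)
    (L alpha c r : R) (x y : 'cV[R]_n) :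
  1 < c -> (forall i t, derivable (derive1 (f i)) t 1) ->
  (forall i t, `|derive1 (derive1 (f i)) t| <= L) ->
  sqnorm (S *m (x - y)) <= r * sqnorm (x - y) ->
  sqnorm (S *m (x - y) - alpha *: (grad f x - grad f y)) <=
    (c / (c - 1) * r + c * alpha ^+ 2 * L ^+ 2) * sqnorm (x - y).
Proof.
move=> c1 df' f''L S_le; have := grad_lipschitz x y df' f''L.
move/(ler_wpM2l (sqr_ge0 alpha)); rewrite -[leLHS]sqnormZ => grad_le.
rewrite [leRHS](_ : _ = c / (c - 1) * (r * sqnorm (x - y)) +
                       c * (alpha ^+ 2 * (L ^+ 2 * sqnorm (x - y)))); last by ring.
exact: sqnormB_le c1 S_le grad_le.
Qed.

Section FlexPDMatrices.
Variables (R : realType) (n : nat) (B : 'M[R]_n) (alpha : R).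
Local Notation W := (1%:M - alpha *: B).

Lemma CmatS T : Cmat B alpha T.+1 = 1%:M + W *m Cmat B alpha T.
Proof.
rewrite /Cmat big_ord_recl expr0 mulmxE mulr_sumr; congr (_ + _).
by apply: eq_bigr => i _; rewrite exprS.
Qed.

Lemma mulmx_W (v : 'cV[R]_n) : W *m v = v - alpha *: (B *m v).
Proof. by rewrite mulmxBl mul1mx -scalemxAl. Qed.

Lemma flexpd_innerE eps (f : 'I_n -> R -> R) (A : 'M[R]_(eps, n)) T xk lk :
  flexpd_inner f A B alpha T xk lk =
  W ^+ T *m xk - alpha *: (Cmat B alpha T *m (grad f xk + A^T *m lk)).
Proof.
rewrite /flexpd_inner; elim: T => [|T IH].
  by rewrite /= expr0 mul1mx /Cmat big_ord0 mul0mx scaler0 subr0.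
rewrite iterS IH; set g := grad f xk + A^T *m lk.
set z := W ^+ T *m xk - alpha *: (Cmat B alpha T *m g).
transitivity (W *m z - alpha *: g).
  by rewrite mulmx_W /g scalerDr opprD !addrA [LHS]addrAC [X in X - _ = _]addrAC.
rewrite /z; clearbody g.
rewrite CmatS exprS mulmxBr -scalemxAr !mulmxA mulmxE (mulmxDl 1%:M) mul1mx.
by rewrite scalerDr opprD [LHS]addrAC addrA.
Qed.

Lemma mulmx_Wpow_ker T (v : 'cV[R]_n) : B *m v = 0 -> W ^+ T *m v = v.
Proof.
move=> Bv0; elim: T => [|T IH]; first by rewrite expr0 mul1mx.
by rewrite exprS -mulmxE -mulmxA IH mulmx_W Bv0 scaler0 subr0.
Qed.

Lemma Nmat_mulmx_ker T (v : 'cV[R]_n) : B *m v = 0 -> Nmat B alpha T *m v = 0.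
Proof.
move=> Bv0; rewrite /Nmat /Mmat -scalemxAl mulmxBl -mulmxA.
by rewrite mulmx_Wpow_ker // subrr scaler0.
Qed.

Lemma invmx_CmatE T : alpha != 0 ->
  invmx (Cmat B alpha T) = Mmat B alpha T + alpha *: Nmat B alpha T.
Proof. by move=> a0; rewrite /Nmat scalerA mulfV // scale1r addrC subrK. Qed.

Lemma flexpd_inner_step eps (f : 'I_n -> R -> R) (A : 'M[R]_(eps, n)) T xk lk :
  alpha != 0 -> Cmat B alpha T \in unitmx ->
  (Mmat B alpha T + alpha *: Nmat B alpha T) *m flexpd_inner f A B alpha T xk lk =
  Mmat B alpha T *m xk - alpha *: (grad f xk + A^T *m lk).
Proof.
move=> a0 Cunit; rewrite -invmx_CmatE // flexpd_innerE mulmxBr -scalemxAr.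
by rewrite mulKmx // mulmxA.
Qed.

End FlexPDMatrices.

Lemma flexpd_dual_in_range (R : realType) n eps (A : 'M[R]_(eps, n)) (beta : R)
    (x : nat -> 'cV[R]_n) (lam : nat -> 'cV[R]_eps) :
  lam 0%N = 0 -> (forall k, lam k.+1 = lam k + beta *: (A *m x k.+1)) ->
  forall k, exists w, lam k = A *m w.
Proof.
move=> lam0 lamS; elim=> [|k [w lamkE]]; first by exists 0; rewrite lam0 mulmx0.
by exists (w + beta *: x k.+1); rewrite lamS lamkE mulmxDr scalemxAr.
Qed.

Lemma dual_residual_split (R : realFieldType) p q (A : 'M[R]_(q, p)) (M N : 'M[R]_p)
    (alpha beta : R) (x0 x1 xs g0 g1 gs : 'cV[R]_p) (l0 ls : 'cV[R]_q) :
  (M + alpha *: N) *m x1 = M *m x0 - alpha *: (g0 + A^T *m l0) ->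
  gs + A^T *m ls = 0 -> A *m xs = 0 -> N *m xs = 0 ->
  alpha *: (A^T *m (l0 + beta *: (A *m x1) - ls)) =
    (M *m (x0 - x1) - alpha *: (g0 - g1)) +
    (alpha *: ((beta *: (A^T *m A) - N) *m (x1 - xs)) - alpha *: (g1 - gs)).
Proof.
move=> step kkt Axs Nxs; rewrite mulmxDl -scalemxAl in step.
rewrite !(mulmxBr, mulmxDr, mulmxBl) -!scalemxAl -!mulmxA -!scalemxAr.
rewrite Axs Nxs mulmx0 scaler0 !subr0.
rewrite -[A^T *m ls](addKr gs) kkt addr0.
(* Once distributed, the identity is linear in the remaining vectors: check it entrywise. *)
move: step; move: (M *m x0) (M *m x1) (N *m x1) (A^T *m l0) (A^T *m (A *m x1)).
move=> Mx0 Mx1 Nx1 ATl0 ATAx1 /matrixP step; apply/matrixP => i j.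
by move: (step i j); rewrite !mxE; lra.
Qed.

Lemma flexpd_dual_residual (R : realType) n eps (f : 'I_n -> R -> R) (A : 'M[R]_(eps, n))
    (B : 'M[R]_n) (alpha beta : R) (T : nat) (x0 x1 xs : 'cV[R]_n) (l0 ls : 'cV[R]_eps) :
  alpha != 0 -> Cmat B alpha T \in unitmx ->
  A *m xs = 0 -> B *m xs = 0 -> grad f xs + A^T *m ls = 0 ->
  x1 = flexpd_inner f A B alpha T x0 l0 ->
  alpha *: (A^T *m (l0 + beta *: (A *m x1) - ls)) =
    (Mmat B alpha T *m (x0 - x1) - alpha *: (grad f x0 - grad f x1)) +
    (alpha *: ((beta *: (A^T *m A) - Nmat B alpha T) *m (x1 - xs)) -
     alpha *: (grad f x1 - grad f xs)).
Proof.
move=> a0 Cunit Axs Bxs kkt x1E.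
apply: (dual_residual_split beta (grad f x1) _ kkt Axs (Nmat_mulmx_ker alpha T Bxs)).
by rewrite x1E flexpd_inner_step.
Qed.

Section UnitaryDiagonal.
Variable R : realType.
Local Notation C := R[i].
Local Notation toC := (real_complex R).

Lemma conj_toC (x : R) : (toC x)^* = toC x.
Proof. by apply/conj_Creal; rewrite complex_real. Qed.

(* [lecR] phrased with [toC], the form produced by [rmorphM]. *)
Lemma ler_toC (x y : R) : (toC x <= toC y) = (x <= y).
Proof. exact: lecR. Qed.

Lemma map_toC_conj m n (S : 'M[R]_(m, n)) : map_mx conjC (map_mx toC S) = map_mx toC S.
Proof. by apply/matrixP => i j; rewrite !mxE conj_toC. Qed.

Variables (n : nat) (P : 'M[C]_n).
Hypothesis P_unitary : P \is unitarymx.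
Implicit Types a b : 'rV[R]_n.

(* [udiag a] is the matrix acting as [diag_mx a] in the orthonormal basis given
   by the rows of [P]; real matrices sharing that basis are handled through it. *)
Definition udiag (a : 'rV[R]_n) : 'M[C]_n := P^t* *m diag_mx (map_mx toC a) *m P.

Lemma mulmx_trC : P *m P^t* = 1%:M.
Proof. exact/unitarymxP. Qed.

Lemma mulmx_trCK : P^t* *m P = 1%:M.
Proof. exact/mulmx1C/mulmx_trC. Qed.

Lemma udiagM a b : udiag a *m udiag b = udiag (\row_j (a 0 j * b 0 j)).
Proof.
rewrite /udiag !mulmxA -[_ *m P *m P^t*]mulmxA mulmx_trC mulmx1.
rewrite -[_ *m diag_mx _ *m diag_mx _]mulmxA mulmx_diag.
rewrite [X in diag_mx X](_ : _ = map_mx toC (\row_j (a 0 j * b 0 j))) //.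
by apply/matrixP => i j; rewrite !mxE rmorphM.
Qed.

Lemma udiagD a b : udiag a + udiag b = udiag (a + b).
Proof. by rewrite /udiag -mulmxDl -mulmxDr -linearD /= map_mxD. Qed.

Lemma udiagB a b : udiag a - udiag b = udiag (a - b).
Proof. by rewrite /udiag map_mxB linearB /= mulmxBr mulmxBl. Qed.

Lemma udiagZ c a : toC c *: udiag a = udiag (c *: a).
Proof. by rewrite /udiag map_mxZ linearZ /= -scalemxAr -scalemxAl. Qed.

Lemma udiag_sum T (a : 'I_T -> 'rV[R]_n) : \sum_(t < T) udiag (a t) = udiag (\sum_(t < T) a t).
Proof.
elim/big_rec2: _ => [|t x y _ ->]; last by rewrite udiagD.
by rewrite /udiag map_mx0 linear0 mulmx0 mul0mx.
Qed.

Lemma udiag1 : udiag (const_mx 1) = 1%:M.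
Proof.
rewrite /udiag; have -> : map_mx toC (const_mx 1 : 'rV[R]_n) = const_mx 1.
  by apply/matrixP => i j; rewrite !mxE rmorph1.
by rewrite diag_const_mx mulmx1 mulmx_trCK.
Qed.

Lemma udiagX a t : udiag a ^+ t = udiag (\row_j (a 0 j ^+ t)).
Proof.
elim: t => [|t IH].
  by rewrite expr0 -idmxE -udiag1; congr udiag; apply/matrixP => i j; rewrite !mxE.
by rewrite exprS IH -mulmxE udiagM; congr udiag; apply/matrixP => i j; rewrite !mxE exprS.
Qed.

Lemma udiag_inv a : (forall j, a 0 j != 0) ->
  udiag a \in unitmx /\ invmx (udiag a) = udiag (\row_j (a 0 j)^-1).
Proof.
move=> a_neq0; have aa1 : udiag a *m udiag (\row_j (a 0 j)^-1) = 1%:M.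
  by rewrite udiagM -udiag1; congr udiag; apply/matrixP => i j; rewrite !mxE divff.
have [a_unit _] := mulmx1_unit aa1.
by split=> //; rewrite -[RHS](mulKmx a_unit) aa1 mulmx1.
Qed.

Lemma row_neq0 j : row j P != 0.
Proof.
apply: contra_neq (@oner_neq0 C) => Pj0.
have /rowP/(_ j) := congr1 (row j) mulmx_trC.
by rewrite row_mul Pj0 mul0mx row1 !mxE !eqxx; move/esym.
Qed.

Lemma row_mul_udiag a j : row j P *m udiag a = toC (a 0 j) *: row j P.
Proof.
rewrite /udiag !mulmxA -!row_mul mulmx_trC mul1mx row_mul row_diag_mx.
by rewrite -scalemxAl -rowE mxE.
Qed.

Lemma udiag_eigenvalue (S : 'M[R]_n) a j : map_mx toC S = udiag a -> eigenvalue S (a 0 j).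
Proof.
move=> SE; rewrite -(eigenvalue_map toC); apply/eigenvalueP.
by exists (row j P); [rewrite SE row_mul_udiag | exact: row_neq0].
Qed.

Lemma udiag_sym (S : 'M[R]_n) a : map_mx toC S = udiag a -> S^T = S.
Proof.
move=> SE; apply: (@map_mx_inj _ _ toC); rewrite -[LHS]map_toC_conj -map_trmx SE.
rewrite /udiag !trmx_mul !map_mxM trmxCK tr_diag_mx map_diag_mx.
by rewrite map_toC_conj mulmxA.
Qed.

Local Notation coord v := (P *m map_mx toC v).

Lemma toC_quad_udiag (S : 'M[R]_n) a (v : 'cV[R]_n) : map_mx toC S = udiag a ->
  toC ((v^T *m S *m v) 0 0) = \sum_j toC (a 0 j) * `|coord v j 0| ^+ 2.
Proof.
move=> SE; have -> : toC ((v^T *m S *m v) 0 0) = (map_mx toC (v^T *m S *m v)) 0 0.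
  by rewrite [RHS]mxE.
rewrite !map_mxM SE /udiag -(map_toC_conj v^T) -map_trmx.
transitivity (((coord v)^t* *m diag_mx (map_mx toC a) *m coord v) 0 0).
  by rewrite trmx_mul map_mxM !mulmxA.
rewrite mxE; apply: eq_bigr => j _.
by rewrite mul_mx_diag !mxE normCK; ring.
Qed.

Lemma toC_sqnorm (v : 'cV[R]_n) : toC (sqnorm v) = \sum_j `|coord v j 0| ^+ 2.
Proof.
have := toC_quad_udiag v (etrans (map_mx1 _ _) (esym udiag1)).
rewrite mulmx1 -sqnormE => ->.
by apply: eq_bigr => j _; rewrite mxE rmorph1 mul1r.
Qed.

Lemma quad_le_udiag (S : 'M[R]_n) a r (v : 'cV[R]_n) : map_mx toC S = udiag a ->
  (forall j, a 0 j <= r) -> (v^T *m S *m v) 0 0 <= r * sqnorm v.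
Proof.
move=> SE a_le; rewrite -ler_toC rmorphM /= toC_sqnorm (toC_quad_udiag _ SE) mulr_sumr.
by apply: ler_sum => j _; rewrite ler_wpM2r ?exprn_ge0 // ler_toC.
Qed.

Lemma quad_ge_udiag (S : 'M[R]_n) a r (v : 'cV[R]_n) : map_mx toC S = udiag a ->
  (forall j, r <= a 0 j \/ coord v j 0 = 0) -> r * sqnorm v <= (v^T *m S *m v) 0 0.
Proof.
move=> SE a_ge; rewrite -ler_toC rmorphM /= toC_sqnorm (toC_quad_udiag _ SE) mulr_sumr.
apply: ler_sum => j _; case: (a_ge j) => [le_ra | ->]; last by rewrite normr0 expr0n /= !mulr0.
by rewrite ler_wpM2r ?exprn_ge0 // ler_toC.
Qed.

(* When [a 0 j = 0], [row j P] is in the left kernel of [A A^T], hence in that of [A^T]: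
   it is orthogonal to the range of [A]. *)
Lemma gram_udiag_coord_eq0 e (A : 'M[R]_(n, e)) a j (w : 'cV[R]_e) :
  map_mx toC (A *m A^T) = udiag a -> a 0 j = 0 -> coord (A *m w) j 0 = 0.
Proof.
move=> GE aj0; set r := row j P *m map_mx toC A.
have rr0 : r *m r^t* = 0.
  rewrite /r trmx_mul map_mxM -map_trmx map_toC_conj map_trmx !mulmxA.
  by rewrite -(mulmxA _ (map_mx toC A)) -map_mxM GE row_mul_udiag aj0 rmorph0 scale0r !mul0mx.
have r0 i : r 0 i = 0.
  have rr_ge0 l : 0 <= r 0 l * (r^t*) l 0 by rewrite !mxE mul_conjC_ge0.
  have /matrixP/(_ 0 0) := rr0; rewrite !mxE => /psumr_eq0P rr_eq0.
  have /eqP := rr_eq0 (fun l _ => rr_ge0 l) i isT.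
  by rewrite !mxE mul_conjC_eq0 => /eqP.
have -> : coord (A *m w) j 0 = (r *m map_mx toC w) 0 0.
  by rewrite /r map_mxM mulmxA -!row_mul [RHS]mxE.
by rewrite mxE big1 // => l _; rewrite r0 mul0r.
Qed.

End UnitaryDiagonal.

Section SymmetricBounds.
Variable R : realType.
Local Notation toC := (real_complex R).

Definition sym_eigbasis n (S : 'M[R]_n) : 'M[R[i]]_n := spectralmx (map_mx toC S).

Definition sym_spectrum n (S : 'M[R]_n) : 'rV[R]_n :=
  map_mx (@complex.Re R) (spectral_diag (map_mx toC S)).

Lemma sym_eigbasis_unitary n (S : 'M[R]_n) : sym_eigbasis S \is unitarymx.
Proof. exact: spectral_unitarymx. Qed.

Lemma sym_udiag n (S : 'M[R]_n) : S^T = S ->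
  map_mx toC S = udiag (sym_eigbasis S) (sym_spectrum S).
Proof.
move=> Ssym; have SC_herm : map_mx toC S \is hermsymmx.
  apply: realsym_hermsym; last by apply/mxOverP => i j; rewrite mxE complex_real.
  by apply/is_hermitianmxP; rewrite expr0 scale1r map_mx_id // map_trmx Ssym.
have /hermitian_normalmx/orthomx_spectralP SCE := SC_herm.
apply: (etrans SCE); rewrite (invmx_unitary (spectral_unitarymx _)).
rewrite [X in diag_mx X](_ : _ = map_mx toC (sym_spectrum S)) //.
apply/matrixP => i j; rewrite !mxE.
have := mxOverP (hermitian_spectral_diag_real SC_herm) i j.
by case: (spectral_diag _ i j) => a b; rewrite complex_real => /eqP ->.
Qed.

Lemma quad_le_max_eig n (S : 'M[R]_n) r (v : 'cV[R]_n) : S^T = S -> is_max_eig S r ->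
  (v^T *m S *m v) 0 0 <= r * sqnorm v.
Proof.
move=> Ssym [_ le_r]; have SE := sym_udiag Ssym.
apply: (quad_le_udiag (sym_eigbasis_unitary S) _ SE) => j.
exact/le_r/(udiag_eigenvalue (sym_eigbasis_unitary S) _ SE).
Qed.

Lemma sqnorm_mulmx_le_max_eig_sqr n (S : 'M[R]_n) r (v : 'cV[R]_n) : S^T = S ->
  is_max_eig (S ^+ 2) r -> sqnorm (S *m v) <= r * sqnorm v.
Proof.
move=> Ssym S2_max; rewrite sqnorm_mulmx Ssym mulmxE -expr2.
by apply: quad_le_max_eig S2_max; rewrite expr2 -mulmxE trmx_mul Ssym.
Qed.

Lemma sqnorm_mulmx_le_udiag n (P : 'M[R[i]]_n) (S : 'M[R]_n) a (r : R) (v : 'cV[R]_n) :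
  P \is unitarymx -> map_mx toC S = udiag P a -> (forall j, `|a 0 j| <= r) ->
  sqnorm (S *m v) <= r ^+ 2 * sqnorm v.
Proof.
move=> P_unitary SE a_le; rewrite sqnorm_mulmx (udiag_sym SE).
apply: (quad_le_udiag P_unitary (a := \row_j (a 0 j * a 0 j))).
  by rewrite map_mxM SE udiagM.
move=> j; rewrite mxE -expr2 -real_normK ?num_real //.
by rewrite lerXn2r ?nnegrE // (le_trans _ (a_le j)).
Qed.

Lemma gram_min_nonzero_eig_gt0 p q (A : 'M[R]_(p, q)) s :
  is_min_nonzero_eig (A *m A^T) s -> 0 < s.
Proof.
move=> [/eigenvalueP [v vG v0] s_neq0 _].
have : s * sqnorm v^T = sqnorm (A^T *m v^T).
  by rewrite sqnorm_mulmx !trmxK vG -scalemxAl mxE sqnormE trmxK.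
have v2_gt0 : 0 < sqnorm v^T by rewrite sqnorm_gt0 // trmx_eq0.
rewrite lt_def s_neq0 /=; move/(congr1 (fun t => t / sqnorm v^T)).
by rewrite mulfK ?gt_eqF // => ->; rewrite divr_ge0 ?sqnorm_ge0.
Qed.

Lemma sqnorm_trmx_mulmx_ge p q (A : 'M[R]_(p, q)) s (w : 'cV[R]_q) :
  is_min_nonzero_eig (A *m A^T) s -> s * sqnorm (A *m w) <= sqnorm (A^T *m (A *m w)).
Proof.
move=> [_ _ s_le]; have Gsym : (A *m A^T)^T = A *m A^T by rewrite trmx_mul trmxK.
have P_unitary := sym_eigbasis_unitary (A *m A^T); have GE := sym_udiag Gsym.
rewrite [leRHS]sqnorm_mulmx trmxK; apply: (quad_ge_udiag P_unitary GE) => j.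
have [dj0 | dj_neq0] := eqVneq (sym_spectrum (A *m A^T) 0 j) 0.
  by right; rewrite (gram_udiag_coord_eq0 P_unitary _ GE dj0).
by left; exact/s_le/dj_neq0/(udiag_eigenvalue P_unitary _ GE).
Qed.

End SymmetricBounds.

Section FlexPDSpectrum.
Variables (R : realType) (n : nat) (B : 'M[R]_n) (alpha rhoB : R) (T : nat).
Hypotheses (B_sym : B^T = B) (B_max : is_max_eig B rhoB).
Hypotheses (alpha_ge0 : 0 <= alpha) (alpha_rhoB_lt1 : alpha * rhoB < 1) (T_gt0 : (0 < T)%N).
Local Notation toC := (real_complex R).
Local Notation P := (sym_eigbasis B).
Local Notation W := (1%:M - alpha *: B).

Let P_unitary := sym_eigbasis_unitary B.
(* The eigenvalues of [W], [Cmat] and [Mmat] in the eigenbasis of [B]. *)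
Let w := \row_j (1 - alpha * sym_spectrum B 0 j).
Let c := \row_j (\sum_(t < T) w 0 j ^+ t).
Let m := \row_j ((c 0 j)^-1 * w 0 j ^+ T).

Let w_gt0 j : 0 < w 0 j.
Proof.
rewrite mxE subr_gt0 (le_lt_trans _ alpha_rhoB_lt1) // ler_wpM2l //.
exact/B_max.2/(udiag_eigenvalue P_unitary _ (sym_udiag B_sym)).
Qed.

Let c_gt0 j : 0 < c 0 j.
Proof.
rewrite mxE (bigD1 (Ordinal T_gt0)) //= expr0 ltr_pwDl // sumr_ge0 // => t _.
by rewrite exprn_ge0 // ltW.
Qed.

Let W_udiag : map_mx toC W = udiag P w.
Proof.
rewrite map_mxB map_mx1 map_mxZ (sym_udiag B_sym) -(udiag1 P_unitary) udiagZ udiagB.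
by congr udiag; apply/matrixP => i j; rewrite !mxE (ord1 i).
Qed.

Lemma Wpow_udiag t : map_mx toC (W ^+ t) = udiag P (\row_j (w 0 j ^+ t)).
Proof.
rewrite -udiagX //; elim: t => [|t IH]; first by rewrite !expr0 map_mx1.
by rewrite !exprS -!mulmxE map_mxM IH W_udiag.
Qed.

Lemma Cmat_udiag : map_mx toC (Cmat B alpha T) = udiag P c.
Proof.
rewrite /Cmat raddf_sum /=; under eq_bigr => t _ do rewrite Wpow_udiag.
rewrite udiag_sum; congr udiag; apply/matrixP => i j; rewrite summxE !mxE (ord1 i).
by apply: eq_bigr => t _; rewrite /w !mxE.
Qed.

Let Cmat_inv := udiag_inv P_unitary (fun j => lt0r_neq0 (c_gt0 j)).

Lemma Cmat_unit : Cmat B alpha T \in unitmx.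
Proof. by rewrite -(map_unitmx toC) Cmat_udiag Cmat_inv.1. Qed.

Lemma Mmat_udiag : map_mx toC (Mmat B alpha T) = udiag P m.
Proof.
rewrite /Mmat map_mxM map_invmx Cmat_udiag Cmat_inv.2 Wpow_udiag (udiagM P_unitary).
by congr udiag; apply/matrixP => i j; rewrite !mxE.
Qed.

Lemma Nmat_sym : (Nmat B alpha T)^T = Nmat B alpha T.
Proof.
apply: (@udiag_sym _ _ P _ (alpha^-1 *: (\row_j (c 0 j)^-1 - m))).
by rewrite /Nmat map_mxZ map_mxB map_invmx Cmat_udiag Cmat_inv.2 Mmat_udiag udiagB udiagZ.
Qed.

Lemma Mmat_sqnorm_le rhoM (v : 'cV[R]_n) : is_max_eig (Mmat B alpha T) rhoM ->
  sqnorm (Mmat B alpha T *m v) <= rhoM ^+ 2 * sqnorm v.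
Proof.
move=> [_ le_rhoM]; apply: (sqnorm_mulmx_le_udiag v P_unitary Mmat_udiag) => j.
rewrite ger0_norm; first exact/le_rhoM/(udiag_eigenvalue P_unitary _ Mmat_udiag).
by rewrite mxE mulr_ge0 ?invr_ge0 ?exprn_ge0 ?ltW.
Qed.

End FlexPDSpectrum.

Theorem lemma3p17
  (R : realType) (n eps : nat) (ends : 'I_eps -> 'I_n * 'I_n)
  (f : 'I_n -> R -> R) (m L : R) (B : 'M[R]_n)
  (alpha beta : R) (T : nat)
  (x : nat -> 'cV[R]_n) (lam : nat -> 'cV[R]_eps)
  (xs : 'cV[R]_n) (lams : 'cV[R]_eps)
  (rhoB rhoM rhoQ sAA : R) :
  (* graph and incidence matrix *)
  simple_connected_graph ends ->
  (* local objectives: twice differentiable, m <= f_i'' <= L *)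
  0 < m -> m <= L ->
  (forall i t, derivable (f i) t 1) ->
  (forall i t, derivable (derive1 (f i)) t 1) ->
  (forall i t, m <= derive1 (derive1 (f i)) t <= L) ->
  (* B: symmetric PSD, same null space as A, off-diagonal support on edges *)
  B^T = B ->
  (forall v : 'cV[R]_n, 0 <= (v^T *m B *m v) 0 0) ->
  (forall v : 'cV[R]_n, B *m v = 0 <-> incidence R ends *m v = 0) ->
  (forall i j, i != j -> B i j != 0 -> graph_adj ends i j) ->
  (* optimal primal-dual pair *)
  incidence R ends *m xs = 0 ->
  (forall y, incidence R ends *m y = 0 -> fsum f xs <= fsum f y) ->
  grad f xs + (incidence R ends)^T *m lams = 0 ->
  B *m xs = 0 ->
  (exists u : 'cV[R]_n, lams = incidence R ends *m u) ->
  (* parameters *)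
  0 < beta -> (0 < T)%N ->
  is_max_eig B rhoB -> 0 < alpha -> alpha * rhoB < 1 ->
  (* FlexPD-C iterates *)
  lam 0%N = 0 ->
  (forall k, x k.+1 = flexpd_inner f (incidence R ends) B alpha T (x k) (lam k)) ->
  (forall k, lam k.+1 = lam k + beta *: (incidence R ends *m x k.+1)) ->
  (* spectral quantities *)
  is_max_eig (Mmat B alpha T) rhoM ->
  is_max_eig ((beta *: ((incidence R ends)^T *m incidence R ends) - Nmat B alpha T) ^+ 2) rhoQ ->
  is_min_nonzero_eig (incidence R ends *m (incidence R ends)^T) sAA ->
  forall dt gt et : R, 1 < dt -> 1 < gt -> 1 < et ->
  forall k : nat,
    sqnorm (lam k.+1 - lams) <=
      dt / (alpha ^+ 2 * sAA) * (et / (et - 1) * rhoM ^+ 2 + et * alpha ^+ 2 * L ^+ 2)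
        * sqnorm (x k - x k.+1)
    + dt / ((dt - 1) * alpha ^+ 2 * sAA)
        * (gt / (gt - 1) * alpha ^+ 2 * rhoQ + gt * alpha ^+ 2 * L ^+ 2)
        * sqnorm (x k.+1 - xs).
Proof.
set A := incidence R ends.
move=> _ m_gt0 _ _ df' f''_bd B_sym _ _ _ Axs _ kkt Bxs [u lamsE] _ T_gt0 B_max alpha_gt0
  alpha_rhoB lam0 xS lamS M_max Q_max sAA_min dt gt et dt1 gt1 et1 k.
have f''L i t : `|derive1 (derive1 (f i)) t| <= L.
  by have /andP[mf fL] := f''_bd i t; rewrite ger0_norm // (le_trans _ mf) // ltW.
set S := beta *: (A^T *m A) - Nmat B alpha T.
have alpha_neq0 : alpha != 0 by rewrite gt_eqF.
have S_sym : S^T = S.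
  by rewrite /S linearB /= linearZ /= trmx_mul trmxK (Nmat_sym B_sym B_max) ?ltW.
have residual := flexpd_dual_residual beta alpha_neq0
  (Cmat_unit B_sym B_max (ltW alpha_gt0) alpha_rhoB T_gt0) Axs Bxs kkt (xS k).
rewrite -lamS in residual.
set E1 := et / (et - 1) * rhoM ^+ 2 + et * alpha ^+ 2 * L ^+ 2.
set E2 := gt / (gt - 1) * alpha ^+ 2 * rhoQ + gt * alpha ^+ 2 * L ^+ 2.
have primal_le :
    sqnorm (Mmat B alpha T *m (x k - x k.+1) - alpha *: (grad f (x k) - grad f (x k.+1)))
    <= E1 * sqnorm (x k - x k.+1).
  apply: sqnorm_sub_grad_le => //.
  exact: (Mmat_sqnorm_le B_sym B_max (ltW alpha_gt0) alpha_rhoB T_gt0 _ M_max).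
have dual_le :
    sqnorm (alpha *: (S *m (x k.+1 - xs)) - alpha *: (grad f (x k.+1) - grad f xs))
    <= E2 * sqnorm (x k.+1 - xs).
  rewrite scalemxAl /E2 -mulrA; apply: sqnorm_sub_grad_le => //.
  rewrite -scalemxAl sqnormZ -mulrA ler_wpM2l ?sqr_ge0 //.
  exact: sqnorm_mulmx_le_max_eig_sqr S_sym Q_max.
have [w lamE] := flexpd_dual_in_range lam0 lamS k.+1.
have sAA_gt0 := gram_min_nonzero_eig_gt0 sAA_min.
have lower : alpha ^+ 2 * sAA * sqnorm (lam k.+1 - lams) <=
    sqnorm (alpha *: (A^T *m (lam k.+1 - lams))).
  by rewrite sqnormZ -mulrA ler_wpM2l ?sqr_ge0 // lamE lamsE -mulmxBr sqnorm_trmx_mulmx_ge.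
rewrite residual [X in _ <= sqnorm X]addrC in lower.
rewrite [leRHS](_ : _ = (dt / (dt - 1) * (E2 * sqnorm (x k.+1 - xs))
                         + dt * (E1 * sqnorm (x k - x k.+1))) / (alpha ^+ 2 * sAA)).
  rewrite ler_pdivlMr ?mulr_gt0 ?exprn_gt0 // mulrC.
  exact: le_trans lower (sqnormD_le dt1 dual_le primal_le).
by field; rewrite lt0r_neq0 // alpha_neq0 subr_eq0 gt_eqF.
Qed.
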